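(* For $k,d\in\mathbb{Z}_{\ge0}$ let $M^o_{k,d}$ (resp. $M^e_{k,d}$) be the set of triples $(m,\mathbf{k},\mathbf{l})$ with $m\in\mathbb{Z}_{\ge0}$, $\mathbf{k}=(k_1,\dots,k_n)$, $\mathbf{l}=(l_1,\dots,l_n)$, $0\le n\le k$, $m+k_1+\dots+k_n=k$, $k_u\ge2$, $l_u\ge0$, $k_u-1-l_u\ge1$, such that $s:=\sum_u(k_u-1-l_u)$ satisfies $s\le d$ and $s$ odd (resp. even; $n=0$ gives $s=0$). Then $|M^o_{0,d}|=|M^o_{1,d}|=0$, $|M^e_{0,d}|=|M^e_{1,d}|=1$, and for $k\ge2$, $d\ge1$, \[|M^o_{k,d}|=|M^o_{k-1,d}|+|M^e_{k-1,d-1}|,\qquad |M^e_{k,d}|=|M^e_{k-1,d}|+|M^o_{k-1,d-1}|.\] In particular $|M^o_{0,0}|=|M^o_{1,1}|=0$, $|M^e_{0,0}|=|M^e_{1,1}|=1$, and $|M^o_{k,k}|=|M^e_{k,k}|=2^{k-2}$ for $k\ge2$.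
   Context: In the paper each triple $(m,\mathbf{k},\mathbf{l})$ represents the number $\sigma^m\mathrm{Ls}_{\mathbf{k}}^{\mathbf{l}}(\sigma)$, where $\mathrm{Ls}_{\mathbf{k}}^{\mathbf{l}}(\sigma)=(-1)^n\int_0^{\sigma}\int_0^{\theta_n}\cdots\int_0^{\theta_2}\prod_u\theta_u^{l_u}(\log|2\sin(\theta_u/2)|)^{k_u-1-l_u}\,d\theta_1\cdots d\theta_n$ for a fixed real $\sigma$. *)

From mathcomp Require Import all_boot.
Set Implicit Arguments. Unset Strict Implicit. Unset Printing Implicit Defensive.

Definition triple := (nat * seq nat * seq nat)%type.

Definition sval (ks ls : seq nat) : nat :=
  sumn [seq p.1 - 1 - p.2 | p <- zip ks ls].

Definition inM (par : bool) (k d : nat) (t : triple) : Prop :=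
  let: (m, ks, ls) := t in
  [/\ size ks = size ls, size ks <= k, m + sumn ks = k,
      all2 (fun ku lu => (2 <= ku) && (1 <= ku - 1 - lu)) ks ls &
      (sval ks ls <= d /\ odd (sval ks ls) = par)].

Definition Mo (k d : nat) : triple -> Prop := inM true k d.
Definition Me (k d : nat) : triple -> Prop := inM false k d.

Definition is_card (T : eqType) (P : T -> Prop) (N : nat) : Prop :=
  exists s : seq T, [/\ uniq s, forall x, x \in s <-> P x & size s = N].

From Pilot Require Import Defs.
From mathcomp Require Import all_boot.
From mathcomp Require Import zify.

Set Implicit Arguments.
Unset Strict Implicit.
Unset Printing Implicit Defensive.

(* Call a triple admissible of weight k when it satisfies every condition of
   M_{k,d} except those on s.  For k >= 2 the admissible triples of weight k
   are in bijection with two copies of those of weight k - 1: the first copy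
   raises m by one and keeps s, the second raises s by exactly one (a positive
   m becomes a new first block (m + 1, m - 1) and m is reset to 0; if m = 0 the
   first k_u grows instead).  Counting by s gives both recurrences, and the
   closed form follows by induction on k for d >= k - 1. *)

Definition admissible_block (ku lu : nat) : bool := (2 <= ku) && (1 <= ku - 1 - lu).

Definition admissible (k : nat) (t : triple) : bool :=
  let: (m, ks, ls) := t in (m + sumn ks == k) && all2 admissible_block ks ls.

Lemma all2_admissible_block ks ls :
  all2 admissible_block ks ls -> size ks = size ls /\ (size ks).*2 <= sumn ks.
Proof.
elim: ks ls => [|ku ks IHks] [|lu ls] //= /andP [/andP [? _] /IHks [-> ?]].
by split; [|lia].
Qed.

Lemma admissible_le1 k t : k <= 1 -> admissible k t -> t = (k, [::], [::]).
Proof.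
case: t => [[m ks] ls] k_le1 /andP [/eqP weight /all2_admissible_block [size_ls size_ks]].
have /size0nil ks_nil : size ks = 0 by lia.
by move: weight size_ls; rewrite ks_nil addn0 => -> /esym /size0nil ->.
Qed.

Definition lift_m (t : triple) : triple :=
  let: (m, ks, ls) := t in (m.+1, ks, ls).

Definition lift_s (t : triple) : triple :=
  let: (m, ks, ls) := t in
  if m is m'.+1 then (0, m.+1 :: ks, m' :: ls) else
  if (ks, ls) is (ku :: ks', lu :: ls') then (0, ku.+1 :: ks', lu :: ls') else t.

Definition unlift (t : triple) : triple :=
  let: (m, ks, ls) := t in
  if m is m'.+1 then (m', ks, ls) else
  if (ks, ls) is (ku :: ks', lu :: ls') then
    if 2 <= ku - 1 - lu then (0, ku.-1 :: ks', lu :: ls') else (ku.-1, ks', ls')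
  else t.

Lemma lift_mK : cancel lift_m unlift.
Proof. by case=> [[m ks] ls]. Qed.

Lemma lift_sK k t : admissible k.+1 t -> unlift (lift_s t) = t.
Proof.
case: t => [[[|m] ks] ls] /=; last by have -> : (2 <= m.+2 - 1 - m) = false by lia.
case: ks ls => [|ku ks] [|lu ls] //= /andP [_ /andP [/andP [_ ?] _]].
by have -> : 2 <= ku.+1 - 1 - lu by lia.
Qed.

Lemma admissible_lift_m k t : admissible k t -> admissible k.+1 (lift_m t).
Proof. by case: t => [[m ks] ls] /andP [/eqP ? /= ->]; rewrite andbT; apply/eqP; lia. Qed.

Lemma admissible_lift_s k t : admissible k.+1 t -> admissible k.+2 (lift_s t).
Proof.
case: t => [[[|m] ks] ls] /=.
  case: ks ls => [|ku ks] [|lu ls] //=; rewrite ?andbF //.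
  move=> /andP [/eqP ? /andP [/andP [? ?] ->]].
  by rewrite andbT; apply/andP; split; [apply/eqP|apply/andP]; lia.
move=> /andP [/eqP ? ->].
by rewrite andbT; apply/andP; split; [apply/eqP|apply/andP]; lia.
Qed.

Lemma admissible_unlift k t : admissible k.+2 t -> admissible k.+1 (unlift t).
Proof.
case: t => [[[|m] ks] ls] /=; last by move=> /andP [/eqP ? ->]; rewrite andbT; apply/eqP; lia.
case: ks ls => [|ku ks] [|lu ls] //=; rewrite ?andbF //.
move=> /andP [/eqP ? /andP [/andP [? ?] adm_ks]].
case: ifP => [?|_] /=; rewrite adm_ks andbT.
  by apply/andP; split; [apply/eqP|apply/andP]; lia.
by apply/eqP; lia.
Qed.

Lemma unlift_cases k t :
  admissible k.+2 t -> t = lift_m (unlift t) \/ t = lift_s (unlift t).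
Proof.
case: t => [[[|m] ks] ls] /=; last by left.
case: ks ls => [|ku ks] [|lu ls] //=; rewrite ?andbF //.
move=> /andP [_ /andP [/andP [? ?] _]]; right.
case: ifP => [?|/negbT ?] /=; first by rewrite prednK //; lia.
(* here ku - 1 - lu = 1, so lu = ku - 2 and the new block is (ku, ku - 2) *)
have -> : ku.-1 = (ku - 2).+1 by lia.
by congr (_, _ :: _, _ :: _); lia.
Qed.

Fixpoint enum_admissible (k : nat) : seq triple :=
  match k with
  | 0 => [:: (0, [::], [::])]
  | 1 => [:: (1, [::], [::])]
  | (k'.+1 as k).+1 => map lift_m (enum_admissible k) ++ map lift_s (enum_admissible k)
  end.

Lemma enum_admissibleSS k :
  enum_admissible k.+2 =
  map lift_m (enum_admissible k.+1) ++ map lift_s (enum_admissible k.+1).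
Proof. by []. Qed.

Lemma mem_enum_admissible k t : (t \in enum_admissible k) = admissible k t.
Proof.
elim: k t => [|k IHk] t.
  by rewrite inE; apply/eqP/idP => [->|/admissible_le1 ->].
case: k IHk => [|k] IHk.
  by rewrite inE; apply/eqP/idP => [->|/admissible_le1 ->].
rewrite enum_admissibleSS mem_cat; apply/orP/idP.
  by case=> /mapP [u]; rewrite IHk => u_adm ->;
    [apply: admissible_lift_m | apply: admissible_lift_s].
move=> t_adm; have unlift_adm : unlift t \in enum_admissible k.+1.
  by rewrite IHk; apply: admissible_unlift.
by case: (unlift_cases t_adm) => ->; [left | right]; apply: map_f.
Qed.

Lemma enum_admissible_uniq k : uniq (enum_admissible k).
Proof.
elim: k => [|[|k] IHk] //; rewrite enum_admissibleSS cat_uniq; apply/and3P; split.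
- by rewrite map_inj_uniq //; apply: can_inj lift_mK.
- apply/hasPn => _ /mapP [[[m ks] ls] _ ->]; apply/mapP => -[[[m' ks'] ls'] _].
  by case: m => [|m] //=; case: ks ls => [|? ?] [|? ?].
- rewrite map_inj_in_uniq //; apply: (can_in_inj (g := unlift)) => u.
  by rewrite mem_enum_admissible; apply: lift_sK.
Qed.

Definition tsval (t : triple) : nat := Defs.sval t.1.2 t.2.

Lemma tsval_lift_s k t : admissible k.+1 t -> tsval (lift_s t) = (tsval t).+1.
Proof.
rewrite /tsval /Defs.sval; case: t => [[[|m] ks] ls] /=; last by lia.
case: ks ls => [|ku ks] [|lu ls] //=; rewrite ?andbF //.
by move=> /andP [_ /andP [/andP [? ?] _]]; lia.
Qed.

Definition sval_in (par : bool) (d : nat) (t : triple) : bool :=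
  (tsval t <= d) && (odd (tsval t) == par).

Definition cardM (par : bool) (k d : nat) : nat := count (sval_in par d) (enum_admissible k).

Lemma inME par k d t : inM par k d t <-> sval_in par d t && admissible k t.
Proof.
case: t => [[m ks] ls]; rewrite /inM /sval_in /admissible /tsval /=; split.
  by case=> _ _ -> -> [-> ->]; rewrite !eqxx.
move=> /andP [/andP [? /eqP ?] /andP [/eqP ? /[dup] ? /all2_admissible_block [? ?]]].
by split => //; lia.
Qed.

Lemma cardM_is_card par k d : is_card (inM par k d) (cardM par k d).
Proof.
exists (filter (sval_in par d) (enum_admissible k)); split.
- exact/filter_uniq/enum_admissible_uniq.
- by move=> t; rewrite mem_filter mem_enum_admissible inME.
- by rewrite size_filter.
Qed.

Lemma cardM_le1 par k d : k <= 1 -> cardM par k d = ~~ par.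
Proof. by case: k => [|[|]] // _; case: par. Qed.

Lemma cardM_rec par k d :
  cardM par k.+2 d.+1 = cardM par k.+1 d.+1 + cardM (~~ par) k.+1 d.
Proof.
rewrite /cardM enum_admissibleSS count_cat !count_map; congr (_ + _).
  by apply: eq_count => -[[m ks] ls].
apply: eq_in_count => t; rewrite mem_enum_admissible => t_adm /=.
rewrite /sval_in (tsval_lift_s t_adm) ltnS /=.
by case: (odd _); case: par.
Qed.

Lemma cardM_full k d :
  2 <= k -> k.-1 <= d -> cardM true k d = 2 ^ (k - 2) /\ cardM false k d = 2 ^ (k - 2).
Proof.
elim: k d => [|[|k] IHk] [|d] // _ le_d; rewrite !cardM_rec.
case: k IHk le_d => [|k] IHk le_d; first by rewrite !cardM_le1.
have [-> ->] := IHk d.+1 isT (ltnW le_d).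
have [-> ->] := IHk d isT le_d.
by rewrite !subSS subn0 expnS; split; lia.
Qed.

Theorem theorem9 :
  exists co ce : nat -> nat -> nat,
    [/\ forall k d, is_card (Mo k d) (co k d) /\ is_card (Me k d) (ce k d),
        forall d, co 0 d = 0 /\ co 1 d = 0 /\ ce 0 d = 1 /\ ce 1 d = 1,
        forall k d, 2 <= k -> 1 <= d ->
          co k d = co k.-1 d + ce k.-1 d.-1 /\ ce k d = ce k.-1 d + co k.-1 d.-1,
        [/\ co 0 0 = 0, co 1 1 = 0, ce 0 0 = 1 & ce 1 1 = 1]
      & forall k, 2 <= k -> co k k = 2 ^ (k - 2) /\ ce k k = 2 ^ (k - 2)].
Proof.
exists (cardM true), (cardM false); split.
- by move=> k d; split; apply: cardM_is_card.
- by move=> d; rewrite !cardM_le1.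
- by move=> [|[|k]] [|d] // _ _; rewrite !cardM_rec.
- by rewrite !cardM_le1.
- by move=> k k_ge2; apply: cardM_full; lia.
Qed.
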